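(* Let $n\ge4$ be even, let $f=\mathrm{Jump}_{n/2-1}$, and let $k\in\{1,\dots,n/2-1\}$. Consider the procedure $\mathrm{moveFirst}_k(x,y)$ defined as follows: repeat (outer loop) — sample $x'$ from $x$ by flipping one position chosen uniformly at random among the positions where $x$ and $y$ agree; then perform up to $\lfloor 2\log_2 n\rfloor+1$ tests, each sampling $u$ from $x'$ by flipping $k-1$ positions chosen uniformly at random (without repetition) among the positions where $x'$ and $y$ differ and querying $f(u)$; if some test gives $f(u)=n/2$, stop the tests and restart the outer loop; if no test gives $f(u)=n/2$, return $x'$. Then $\mathrm{moveFirst}_k$ uses only binary unbiased variation operators, and if $(x,y)$ is an opposing $k$-pair, the following hold. (i) Let $X$ be a geometric random variable with success probability $1/2$ (number of trials up to and including the first success) and let $T$ be the number of fitness evaluations of one run; then $T$ is stochastically dominated by $(1+2\log_2 n)X$, also when conditioning on the output satisfying $d(x')=k+1$. (ii) With probability at least $1-(2\log_2 n)/n^2$, the output $x'$ satisfies $d(x')=k+1$, $H(x,x')=1$, and $H(x',y)=2k+1$.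
   Context: For $x\in\{0,1\}^n$ let $|x|_1=\sum_ix_i$ and $H$ the Hamming distance. For $n$ even, $\mathrm{Jump}_{n/2-1}(x)=n$ if $|x|_1=n$, $=n/2$ if $|x|_1=n/2$, and $=0$ otherwise. Let $d(x)=\big||x|_1-n/2\big|$ and $\mathrm{sgn}(x)\in\{-1,0,+1\}$ the sign of $|x|_1-n/2$. A pair $(x,y)$ is an opposing $k$-pair if $\mathrm{sgn}(x)\,\mathrm{sgn}(y)=-1$, $d(x)=d(y)=k$, and $H(x,y)=2k$. A binary unbiased variation operator samples from a family $(D(\cdot\mid y^{(1)},y^{(2)}))$ of distributions on $\{0,1\}^n$ invariant under XOR-ing all arguments with a common $z$ and under applying a common permutation of positions to all arguments. *)

From Stdlib Require Import Reals ZArith.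
From mathcomp Require Import all_boot.

Delimit Scope R_scope with Re.
Set Implicit Arguments.
Unset Strict Implicit.
Unset Printing Implicit Defensive.

Definition bs (n : nat) := {ffun 'I_n -> bool}.

Definition ones n (x : bs n) : nat := #|[set i | x i]|.

Definition ham n (x y : bs n) : nat := #|[set i | x i != y i]|.

Definition jump n (x : bs n) : nat :=
  if ones x == n then n else if ones x == n./2 then n./2 else 0.

Definition dhalf n (x : bs n) : nat :=
  Z.abs_nat (Z.of_nat (ones x) - Z.of_nat (n./2)).

Definition sgnhalf n (x : bs n) : Z :=
  Z.sgn (Z.of_nat (ones x) - Z.of_nat (n./2)).

Definition opposing_pair n (k : nat) (x y : bs n) : Prop :=
  (sgnhalf x * sgnhalf y = -1)%Z /\ dhalf x = k /\ dhalf y = k /\ ham x y = 2 * k.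

Definition flip n (x : bs n) (i : 'I_n) : bs n :=
  [ffun j => if j == i then ~~ x j else x j].
Definition flipset n (x : bs n) (S : {set 'I_n}) : bs n :=
  [ffun j => if j \in S then ~~ x j else x j].

Definition agree n (x y : bs n) : {set 'I_n} := [set i | x i == y i].
Definition differ n (x y : bs n) : {set 'I_n} := [set i | x i != y i].

Definition indR (b : bool) : R := if b then 1%Re else 0%Re.

(* Binary unbiased variation operators: D a b z = probability of sampling z
   given the two arguments (a, b). *)
Definition bxor n (a w : bs n) : bs n := [ffun i => xorb (a i) (w i)].
Definition bperm n (s : 'I_n -> 'I_n) (a : bs n) : bs n := [ffun i => a (s i)].

Definition binary_unbiased n (D : bs n -> bs n -> bs n -> R) : Prop :=
  (forall w a b z, D (bxor a w) (bxor b w) (bxor z w) = D a b z) /\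
  (forall s : 'I_n -> 'I_n, bijective s ->
     forall a b z, D (bperm s a) (bperm s b) (bperm s z) = D a b z).

Definition K1 n (x y z : bs n) : R :=
  \big[Rplus/0%Re]_(i in agree x y)
     (/ INR #|agree x y| * indR (z == flip x i))%Re.

Definition ksets n (k : nat) (x y : bs n) : {set {set 'I_n}} :=
  [set S : {set 'I_n} | (S \subset differ x y) && (#|S| == k.-1)].
Definition K2 n (k : nat) (x y u : bs n) : R :=
  \big[Rplus/0%Re]_(S in ksets k x y)
     (/ INR #|ksets k x y| * indR (u == flipset x S))%Re.

Definition psucc n (k : nat) (x' y : bs n) : R :=
  \big[Rplus/0%Re]_(u : bs n) (K2 k x' y u * indR (jump u == n./2))%Re.

Definition log2 (r : R) : R := (ln r / ln 2)%Re.

Definition ntests (n : nat) : nat :=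
  (Z.to_nat (Int_part (2 * log2 (INR n))%Re)).+1.

(* One outer iteration, starting from x (fitness evaluations = tests):
   - returns z after exactly ntests n evaluations *)
Definition iter_ret n (k : nat) (x y z : bs n) (t : nat) : R :=
  (K1 x y z * (1 - psucc k z y) ^ ntests n * indR (t == ntests n))%Re.
(* - restarts after exactly j evaluations (the j-th test succeeded) *)
Definition iter_restart n (k : nat) (x y : bs n) (j : nat) : R :=
  if (1 <= j <= ntests n) then
    \big[Rplus/0%Re]_(x' : bs n)
       (K1 x y x' * (1 - psucc k x' y) ^ (j - 1) * psucc k x' y)%Re
  else 0%Re.

(* law_iter r z t = Pr[run performs exactly r restarts, outputs z, and uses
   exactly t fitness evaluations] *)
Fixpoint law_iter n (k : nat) (x y : bs n) (r : nat) (z : bs n) (t : nat) : R :=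
  match r with
  | 0 => iter_ret k x y z t
  | r'.+1 => \big[Rplus/0%Re]_(j < t.+1)
               (iter_restart k x y j * law_iter k x y r' z (t - j))%Re
  end.

(* Joint law of (output, T) of moveFirst_k(x, y): Pr[output = z /\ T = t].
   Each restart costs >= 1 evaluation, so at most t restarts are possible. *)
Definition law n (k : nat) (x y z : bs n) (t : nat) : R :=
  \big[Rplus/0%Re]_(r < t.+1) law_iter k x y r z t.

Definition Rleb (a b : R) : bool := if Rle_dec a b then true else false.

(* Pr[T <= s /\ E(output)] for real s (non-terminating runs have T = oo) *)
Definition probT_le n (k : nat) (x y : bs n) (E : pred (bs n)) (s : R) : R :=
  \big[Rplus/0%Re]_(t < (Z.to_nat (up s)).+1 | Rleb (INR t) s)
     \big[Rplus/0%Re]_(z | E z) law k x y z t.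

(* partial sums  Pr[T <= N /\ E(output)]; their limit is Pr[E(output)] *)
Definition probE_partial n (k : nat) (x y : bs n) (E : pred (bs n)) (N : nat) : R :=
  \big[Rplus/0%Re]_(t < N.+1) \big[Rplus/0%Re]_(z | E z) law k x y z t.

(* Pr[c X <= s] for X geometric with success probability 1/2 (support 1,2,..)
   and c >= 1 *)
Definition geom_le (c s : R) : R :=
  \big[Rplus/0%Re]_(i < (Z.to_nat (up s)).+1 | (0 < i)%N && Rleb (INR i * c) s)
     ((/ 2) ^ i)%Re.

From Stdlib Require Import Reals ZArith Lia Lra.
From HB Require Import structures.
From mathcomp Require Import all_boot zify.
Delimit Scope R_scope with Re.

(* For an opposing pair, all 2k positions where x and y differ carry the same
   bit b0 in x, so exactly half of the n - 2k agreement positions are outward: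
   flipping one moves x to distance k+1 from the middle, where no test can hit
   level n/2, so that x' is always returned.  Flipping an inward position puts
   x' at distance k-1 instead, and a single test then hits level n/2 with
   probability at least 1/2, so x' survives all m = ntests n tests with
   probability at most 2^-m.  Hence a round restarts with probability at most
   1/2 and costs at most m <= 1 + 2 log2 n evaluations, which gives the
   geometric domination of T by a renewal argument; and the output is an
   outward flip with probability at least (1/2) / ((1 + 2^-m) / 2) >= 1 - 2^-m
   >= 1 - 2 log2 n / n^2.  Unbiasedness holds because both operators only see
   the agreement and difference sets of their arguments, which XOR-ing and
   permuting positions transport. *)

Set Implicit Arguments.
Unset Strict Implicit.
Unset Printing Implicit Defensive.

Lemma RplusA : associative Rplus. Proof. by move=> a b c; rewrite Rplus_assoc. Qed.
HB.instance Definition _ :=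
  Monoid.isComLaw.Build R 0%Re Rplus RplusA Rplus_comm Rplus_0_l.
HB.instance Definition _ := Monoid.isMulLaw.Build R 0%Re Rmult Rmult_0_l Rmult_0_r.
HB.instance Definition _ :=
  Monoid.isAddLaw.Build R Rmult Rplus Rmult_plus_distr_r Rmult_plus_distr_l.

Local Open Scope R_scope.

Lemma sumR_ge0 (I : Type) (r : seq I) (P : pred I) (F : I -> R) :
  (forall i, P i -> 0 <= F i) -> 0 <= \big[Rplus/0]_(i <- r | P i) F i.
Proof. by move=> F0; apply: big_ind => //; [lra | move=> a b; lra]. Qed.

Lemma ler_sumR (I : Type) (r : seq I) (P : pred I) (F G : I -> R) :
  (forall i, P i -> F i <= G i) ->
  \big[Rplus/0]_(i <- r | P i) F i <= \big[Rplus/0]_(i <- r | P i) G i.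
Proof. by move=> FG; apply: (big_ind2 Rle) => //; [lra | move=> a b c d; lra]. Qed.

Lemma ler_sumR_subset (I : Type) (r : seq I) (P Q : pred I) (F : I -> R) :
  (forall i, P i -> Q i) -> (forall i, Q i -> 0 <= F i) ->
  \big[Rplus/0]_(i <- r | P i) F i <= \big[Rplus/0]_(i <- r | Q i) F i.
Proof.
move=> PQ F0; rewrite big_mkcond [X in _ <= X]big_mkcond; apply: ler_sumR => i _.
case: ifP => Pi; first by rewrite PQ //; lra.
by case: ifP => Qi; [exact: F0 | lra].
Qed.

Lemma sumR_const (I : finType) (A : {pred I}) (c : R) :
  \big[Rplus/0]_(i in A) c = INR #|A| * c.
Proof.
rewrite big_const; elim: #|A| => [|k IH]; first by rewrite /=; lra.
by rewrite S_INR -[iter _ _ _]/(c + iter k _ _) IH; lra.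
Qed.

Lemma sumR_indR_eq (T : finType) (w : T) (G : T -> R) :
  \big[Rplus/0]_(z : T) (indR (z == w) * G z) = G w.
Proof.
rewrite (bigD1 w) //= eqxx big1 /indR ?Rplus_0_r ?Rmult_1_l // => z /negbTE ->.
exact: Rmult_0_l.
Qed.

Lemma indR_bounds b : 0 <= indR b <= 1.
Proof. by case: b => /=; lra. Qed.

Lemma invR_nat_ge0 (p : nat) : 0 <= / INR p.
Proof.
case: p => [|p]; first by rewrite Rinv_0; lra.
by left; apply/Rinv_0_lt_compat/lt_0_INR; lia.
Qed.

Lemma RlebP a b : Rleb a b = true <-> a <= b.
Proof. by rewrite /Rleb; case: Rle_dec. Qed.

Lemma sumR_nat1 (F : nat -> R) : \big[Rplus/0]_(0 <= t < 1) F t = F 0%N.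
Proof. by rewrite big_nat_recr //= big_geq // Rplus_0_l. Qed.

Lemma sumR_triangle (f : nat -> nat -> R) N :
  \big[Rplus/0]_(0 <= t < N.+1) \big[Rplus/0]_(0 <= j < t.+1) f j (t - j)%N =
  \big[Rplus/0]_(0 <= j < N.+1) \big[Rplus/0]_(0 <= t < (N - j).+1) f j t.
Proof.
elim: N => [|N IH]; first by rewrite !sumR_nat1.
rewrite big_nat_recr // IH [in RHS]big_nat_recr //= subnn sumR_nat1.
rewrite [X in _ = X + _](eq_big_nat _ _ (F2 := fun j =>
  \big[Rplus/0]_(0 <= t < (N - j).+1) f j t + f j (N.+1 - j)%N)); last first.
  by move=> j /andP [_ j_le]; rewrite subSn // big_nat_recr.
by rewrite [X in _ + X = _]big_nat_recr //= subnn big_split /= Rplus_assoc.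
Qed.

Lemma sumR_indR_nat m N : (0 < m)%N ->
  \big[Rplus/0]_(0 <= t < N.+1) indR (t == m) = if (m <= N)%N then 1 else 0.
Proof.
move=> m_gt0; elim: N => [|N IH]; first by rewrite sumR_nat1; case: m m_gt0.
rewrite big_nat_recr //= IH /indR.
case: (leqP m N) => [m_le|N_lt].
  by rewrite (leqW m_le) (_ : N.+1 == m = false); [lra | lia].
case: (eqVneq N.+1 m) => [->|N1_m]; first by rewrite leqnn; lra.
by rewrite (_ : (m <= N.+1)%N = false); [lra | lia].
Qed.

Lemma geometric_sumR (a : R) j :
  (1 - a) * \big[Rplus/0]_(r < j) a ^ r = 1 - a ^ j.
Proof.
elim: j => [|j IH]; first by rewrite big_ord0 /=; ring.
by rewrite big_ord_recr /= Rmult_plus_distr_l IH; ring.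
Qed.

Lemma geometric_sumR_div (a : R) j : a < 1 ->
  \big[Rplus/0]_(r < j) a ^ r = (1 - a ^ j) / (1 - a).
Proof. by move=> a1; rewrite -(geometric_sumR a j); field; lra. Qed.

Lemma ler_sumR_downward_closed (f g : nat -> R) (P : pred nat) M :
  (forall i j, (i <= j)%N -> P j -> P i) ->
  (forall j, \big[Rplus/0]_(i < j) f i <= \big[Rplus/0]_(i < j) g i) ->
  \big[Rplus/0]_(i < M | P i) f i <= \big[Rplus/0]_(i < M | P i) g i.
Proof.
move=> Pdown fg; elim: M => [|M IH]; first by rewrite !big_ord0; lra.
case PM: (P M); last first.
  by rewrite [X in X <= _]big_mkcond [X in _ <= X]big_mkcond !big_ord_recr /= PM
    !Rplus_0_r -!big_mkcond.
have prefix F : \big[Rplus/0]_(i < M.+1 | P i) F i = \big[Rplus/0]_(i < M.+1) F i.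
  by apply: eq_bigl => i; apply: (Pdown _ M) => //; rewrite -ltnS.
by rewrite !prefix.
Qed.

Lemma half_pow_sumR j : \big[Rplus/0]_(r < j) (/2) ^ r.+1 = 1 - (/2) ^ j.
Proof.
elim: j => [|j IH]; first by rewrite big_ord0 /=; ring.
by rewrite big_ord_recr /= IH; field.
Qed.

Lemma geom_leE c s :
  geom_le c s =
  \big[Rplus/0]_(r < Z.to_nat (up s) | Rleb (INR r.+1 * c) s) (/2) ^ r.+1.
Proof.
rewrite /geom_le big_mkcond big_ord_recl [in RHS]big_mkcond /= Rplus_0_l.
by apply: eq_bigr => i _; rewrite /bump /=.
Qed.

(* A downward-closed index set is a prefix, on which both sides are explicit
   geometric sums and [1 - 2^-j <= 1 - a^j]. *)
Lemma geometric_prefix_le N (P Q : pred nat) (a b : R) :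
  (forall i j, (i <= j)%N -> P j -> P i) -> (forall r, P r -> Q r) ->
  0 <= a <= /2 -> 0 <= b ->
  \big[Rplus/0]_(r < N | P r) ((/2) ^ r.+1 * (b / (1 - a))) <=
  b * \big[Rplus/0]_(r < N | Q r) a ^ r.
Proof.
move=> Pdown PQ a_bd b_ge0.
apply: (Rle_trans _ (b * \big[Rplus/0]_(r < N | P r) a ^ r)); last first.
  apply: Rmult_le_compat_l => //.
  by apply: ler_sumR_subset => [r /PQ //|r _]; apply: pow_le; lra.
rewrite big_distrr /=.
apply: (@ler_sumR_downward_closed (fun r => (/2) ^ r.+1 * (b / (1 - a)))
  (fun r => b * a ^ r)) => // j.
have -> : \big[Rplus/0]_(i < j) ((/2) ^ i.+1 * (b / (1 - a))) =
          (1 - (/2) ^ j) * (b / (1 - a)) by rewrite -half_pow_sumR big_distrl.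
have -> : \big[Rplus/0]_(i < j) (b * a ^ i) = b * ((1 - a ^ j) / (1 - a)).
  by rewrite -geometric_sumR_div ?big_distrr //; lra.
have a_j : a ^ j <= (/2) ^ j by apply: pow_incr; lra.
have : 0 <= b * / (1 - a).
  by apply: Rmult_le_pos => //; left; apply: Rinv_0_lt_compat; lra.
rewrite /Rdiv; nra.
Qed.

(* [renewal r z t]: probability of a run that restarts exactly [r] times, uses
   [t] evaluations in total and outputs [z], when each round independently
   restarts after [j] evaluations with probability [rho j] (for [1 <= j <= m])
   or outputs [z] after exactly [m] evaluations with probability [beta z]. *)
Section Renewal.
Variables (T : finType) (rho : nat -> R) (beta : T -> R) (m : nat).
Hypotheses (m_gt0 : (0 < m)%N) (rho_ge0 : forall j, 0 <= rho j)
  (rho0 : rho 0%N = 0) (rho_gt : forall j, (m < j)%N -> rho j = 0)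
  (beta_ge0 : forall z, 0 <= beta z).

Fixpoint renewal (r : nat) (z : T) (t : nat) : R :=
  match r with
  | 0 => beta z * indR (t == m)
  | r'.+1 => \big[Rplus/0]_(j < t.+1) (rho j * renewal r' z (t - j))
  end.

Definition restart_mass : R := \big[Rplus/0]_(0 <= j < m.+1) rho j.
Definition renewal_cdf (r : nat) (z : T) (N : nat) : R :=
  \big[Rplus/0]_(0 <= t < N.+1) renewal r z t.
Definition renewal_law (z : T) (t : nat) : R :=
  \big[Rplus/0]_(r < t.+1) renewal r z t.
Definition output_mass (E : pred T) : R := \big[Rplus/0]_(z | E z) beta z.

Lemma renewal_ge0 r z t : 0 <= renewal r z t.
Proof.
elim: r t => [|r IH] t /=; last by apply: sumR_ge0 => j _; exact: Rmult_le_pos.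
by apply: Rmult_le_pos => //; case: (indR_bounds (t == m)).
Qed.

Lemma renewal_small r z t : (t < r)%N -> renewal r z t = 0.
Proof.
elim: r t => [|r IH] t //= t_lt; apply: big1 => j _.
have [->|j_gt0] := posnP j; first by rewrite rho0 Rmult_0_l.
by rewrite IH ?Rmult_0_r //; have := ltn_ord j; lia.
Qed.

Lemma restart_mass_ge0 : 0 <= restart_mass.
Proof. exact: sumR_ge0. Qed.

Lemma restart_prefix_eq N : (m <= N)%N ->
  \big[Rplus/0]_(0 <= j < N.+1) rho j = restart_mass.
Proof.
elim: N => [|N IH]; first by rewrite leqn0 => /eqP m0; move: m_gt0; rewrite m0.
rewrite leq_eqVlt => /orP [/eqP <- //|m_lt].
by rewrite big_nat_recr //= rho_gt // Rplus_0_r IH.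
Qed.

Lemma restart_prefix_le N : \big[Rplus/0]_(0 <= j < N.+1) rho j <= restart_mass.
Proof.
case: (leqP m N) => [m_le|N_lt]; first by rewrite restart_prefix_eq //; lra.
rewrite /restart_mass (@big_cat_nat _ _ _ N.+1 0 m.+1) //=; last exact: ltnW.
by have := @sumR_ge0 _ (index_iota N.+1 m.+1) xpredT rho (fun j _ => rho_ge0 j); lra.
Qed.

Lemma renewal_cdf0 z N : renewal_cdf 0 z N = beta z * (if (m <= N)%N then 1 else 0).
Proof. by rewrite /renewal_cdf /= -big_distrr /= sumR_indR_nat. Qed.

Lemma renewal_cdfS r z N :
  renewal_cdf r.+1 z N =
  \big[Rplus/0]_(0 <= j < N.+1) (rho j * renewal_cdf r z (N - j)).
Proof.
have renewalS t : renewal r.+1 z t =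
    \big[Rplus/0]_(0 <= j < t.+1) (rho j * renewal r z (t - j)).
  by rewrite /= big_mkord.
rewrite /renewal_cdf; under eq_bigr do rewrite renewalS.
rewrite (sumR_triangle (fun j t => rho j * renewal r z t)).
by apply: eq_bigr => j _; rewrite big_distrr.
Qed.

Lemma renewal_cdf_le r z N : renewal_cdf r z N <= beta z * restart_mass ^ r.
Proof.
have bz := beta_ge0 z; elim: r N => [|r IH] N.
  by rewrite renewal_cdf0 /=; case: ifP => _; lra.
rewrite renewal_cdfS.
apply: (Rle_trans _ (\big[Rplus/0]_(0 <= j < N.+1) rho j * (beta z * restart_mass ^ r))).
  by rewrite big_distrl; apply: ler_sumR => j _; apply: Rmult_le_compat_l.
have h : 0 <= beta z * restart_mass ^ r.
  by apply: Rmult_le_pos => //; apply: pow_le; exact: restart_mass_ge0.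
apply: (Rle_trans _ (restart_mass * (beta z * restart_mass ^ r))).
  exact: Rmult_le_compat_r (restart_prefix_le N).
by right; rewrite /=; ring.
Qed.

Lemma renewal_cdf_eq r z N : (r.+1 * m <= N)%N ->
  renewal_cdf r z N = beta z * restart_mass ^ r.
Proof.
elim: r N => [|r IH] N rm_le.
  by rewrite renewal_cdf0 (_ : (m <= N)%N) /=; [ring | lia].
rewrite renewal_cdfS
  (eq_big_nat _ _ (F2 := fun j => rho j * (beta z * restart_mass ^ r))).
  by rewrite -big_distrl /= restart_prefix_eq /=; [ring | lia].
move=> j _; case: (leqP j m) => [j_le|j_gt]; last by rewrite rho_gt // !Rmult_0_l.
by rewrite IH //; lia.
Qed.

Lemma renewal_law_widen z t N : (t <= N)%N ->
  renewal_law z t = \big[Rplus/0]_(0 <= r < N.+1) renewal r z t.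
Proof.
move=> t_le; rewrite /renewal_law -(big_mkord xpredT (fun r => renewal r z t)).
rewrite (@big_nat_widen _ _ _ 0 t.+1 N.+1) // big_mkcond /=.
apply: eq_bigr => r _; case: ifP => // /negbT; rewrite -leqNgt => r_gt.
by rewrite renewal_small.
Qed.

Lemma sum_renewal_law (E : pred T) (P : pred nat) N :
  \big[Rplus/0]_(t < N.+1 | P t) \big[Rplus/0]_(z | E z) renewal_law z t =
  \big[Rplus/0]_(z | E z) \big[Rplus/0]_(0 <= r < N.+1)
      \big[Rplus/0]_(t < N.+1 | P t) renewal r z t.
Proof.
rewrite (eq_bigr (fun t : 'I_N.+1 => \big[Rplus/0]_(z | E z)
             \big[Rplus/0]_(0 <= r < N.+1) renewal r z t)); last first.
  by move=> t _; apply: eq_bigr => z _; apply: renewal_law_widen; rewrite -ltnS.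
by rewrite exchange_big /=; apply: eq_bigr => z _; rewrite exchange_big.
Qed.

Lemma sum_renewal_lb z (P Q : pred nat) N :
  (forall r, Q r -> (r.+1 * m <= N)%N /\ (forall t, (t <= r.+1 * m)%N -> P t)) ->
  \big[Rplus/0]_(0 <= r < N.+1 | Q r) (beta z * restart_mass ^ r) <=
  \big[Rplus/0]_(0 <= r < N.+1) \big[Rplus/0]_(t < N.+1 | P t) renewal r z t.
Proof.
move=> QP; apply: (Rle_trans _ (\big[Rplus/0]_(0 <= r < N.+1 | Q r)
             \big[Rplus/0]_(t < N.+1 | P t) renewal r z t)); last first.
  by apply: ler_sumR_subset => // r _; apply: sumR_ge0 => t _; exact: renewal_ge0.
apply: ler_sumR => r /QP [rm_le rm_P].
rewrite -(renewal_cdf_eq z (leqnn _)) /renewal_cdf.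
rewrite (@big_nat_widen _ _ _ 0 _ N.+1) // big_mkord.
rewrite big_mkcond [X in _ <= X]big_mkcond /=; apply: ler_sumR => t _.
case: ifP => t_le; first by rewrite rm_P //; lra.
by case: ifP => _; [exact: renewal_ge0 | lra].
Qed.

Lemma output_mass_ge0 E : 0 <= output_mass E.
Proof. exact: sumR_ge0. Qed.

Lemma sum_output_mass (E : pred T) (Q : pred nat) N :
  \big[Rplus/0]_(z | E z) \big[Rplus/0]_(0 <= r < N | Q r) (beta z * restart_mass ^ r) =
  output_mass E * \big[Rplus/0]_(0 <= r < N | Q r) restart_mass ^ r.
Proof.
rewrite exchange_big big_distrr /=; apply: eq_bigr => r _.
by rewrite /output_mass big_distrl.
Qed.

Lemma renewal_time_geometric_lb (E : pred T) s c :
  INR m <= c -> 0 <= restart_mass <= /2 ->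
  geom_le c s * (output_mass E / (1 - restart_mass)) <=
  \big[Rplus/0]_(t < (Z.to_nat (up s)).+1 | Rleb (INR t) s)
     \big[Rplus/0]_(z | E z) renewal_law z t.
Proof.
move=> m_le_c Rt_bd; set N := Z.to_nat (up s).
rewrite (sum_renewal_law E (fun t => Rleb (INR t) s) N).
pose Q r := Rleb (INR (r.+1 * m)) s.
have QP r : Q r -> (r.+1 * m <= N)%N /\
                   (forall t, (t <= r.+1 * m)%N -> Rleb (INR t) s).
  move=> /RlebP rm_s; split.
    have [s_up _] := archimed s.
    rewrite INR_IZR_INZ in rm_s.
    have /lt_IZR : IZR (Z.of_nat (r.+1 * m)) < IZR (up s) by lra.
    by rewrite /N; lia.
  by move=> t /leP/le_INR t_le; apply/RlebP; lra.
apply: (Rle_trans _ (\big[Rplus/0]_(z | E z)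
    \big[Rplus/0]_(0 <= r < N.+1 | Q r) (beta z * restart_mass ^ r))); last first.
  by apply: ler_sumR => z _; exact: (sum_renewal_lb z QP).
rewrite sum_output_mass.
apply: (Rle_trans _ (output_mass E * \big[Rplus/0]_(0 <= r < N | Q r) restart_mass ^ r)).
  rewrite big_mkord geom_leE -/N big_distrl /=.
  have c_ge0 : 0 <= c by have := pos_INR m; lra.
  apply: (@geometric_prefix_le N (fun r => Rleb (INR r.+1 * c) s)) => //;
    last exact: output_mass_ge0.
  - move=> i j /leP/le_INR ij /RlebP j_s; apply/RlebP; apply: Rle_trans j_s.
    by apply: Rmult_le_compat_r => //; rewrite !S_INR; lra.
  - move=> r /RlebP r_s; apply/RlebP; apply: Rle_trans r_s.
    by rewrite mult_INR; apply: Rmult_le_compat_l => //; exact: pos_INR.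
apply: Rmult_le_compat_l; first exact: output_mass_ge0.
rewrite (@big_nat_widen _ _ _ 0 N N.+1) //.
by apply: ler_sumR_subset => [r /andP [] //|r _]; apply: pow_le; lra.
Qed.

Lemma renewal_output_bounds (E : pred T) N : 0 <= restart_mass < 1 ->
  output_mass E * ((1 - restart_mass ^ (N %/ m)) / (1 - restart_mass)) <=
  \big[Rplus/0]_(t < N.+1) \big[Rplus/0]_(z | E z) renewal_law z t <=
  output_mass E / (1 - restart_mass).
Proof.
move=> Rt_bd; have bE := output_mass_ge0 E.
rewrite (sum_renewal_law E xpredT N); split.
  apply: (Rle_trans _ (\big[Rplus/0]_(z | E z) \big[Rplus/0]_(0 <= r < N.+1 |
             (r < N %/ m)%N) (beta z * restart_mass ^ r))); last first.
    apply: ler_sumR => z _.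
    apply: (@sum_renewal_lb z xpredT (fun r => (r < N %/ m)%N)) => r r_lt.
    by split => //; rewrite -leq_divRL.
  rewrite sum_output_mass -(@big_nat_widen _ _ _ 0 _ N.+1 xpredT); last first.
    exact/leqW/leq_div.
  by rewrite big_mkord -geometric_sumR_div; [lra | lra].
apply: (Rle_trans _ (\big[Rplus/0]_(z | E z)
    \big[Rplus/0]_(0 <= r < N.+1) (beta z * restart_mass ^ r))).
  apply: ler_sumR => z _; apply: ler_sumR => r _.
  by rewrite -(big_mkord xpredT (renewal r z)); exact: renewal_cdf_le.
rewrite (sum_output_mass E xpredT N.+1) big_mkord geometric_sumR_div; last lra.
have pow_ge0 : 0 <= restart_mass ^ N.+1 by apply: pow_le; lra.
rewrite /Rdiv -Rmult_assoc; apply: Rmult_le_compat_r; last nra.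
by left; apply: Rinv_0_lt_compat; lra.
Qed.

Lemma renewal_output_cvg (E : pred T) : 0 <= restart_mass < 1 ->
  Un_cv (fun N => \big[Rplus/0]_(t < N.+1) \big[Rplus/0]_(z | E z) renewal_law z t)
        (output_mass E / (1 - restart_mass)).
Proof.
move=> Rt_bd eps eps_gt0; set a := restart_mass in Rt_bd *; set b := output_mass E.
have b_ge0 : 0 <= b := output_mass_ge0 E.
have tol : 0 < eps * (1 - a) / (b + 1) by apply: Rdiv_lt_0_compat; nra.
have [N0 small] := pow_lt_1_zero a (ltac:(rewrite Rabs_pos_eq; lra)) _ tol.
exists (N0 * m)%N => N N_ge.
have /small : (N0 <= N %/ m)%coq_nat by apply/leP; rewrite leq_divRL //; apply/leP.
rewrite Rabs_pos_eq; last by apply: pow_le; lra.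
set q := a ^ (N %/ m) => q_small; have q_ge0 : 0 <= q by apply: pow_le; lra.
have [lb ub] := renewal_output_bounds E N Rt_bd; rewrite -/a -/b -/q in lb ub.
rewrite /R_dist Rabs_left1; last lra.
have q_b : q * (b + 1) < eps * (1 - a).
  move: q_small; rewrite /Rdiv => /(Rmult_lt_compat_r (b + 1)).
  by rewrite Rmult_assoc Rinv_l; lra.
suff : b * q / (1 - a) < eps.
  by have : b / (1 - a) - b * ((1 - q) / (1 - a)) = b * q / (1 - a); [field | ]; lra.
apply: (Rmult_lt_reg_r (1 - a)); first lra.
by rewrite /Rdiv Rmult_assoc Rinv_l; [nra | lra].
Qed.

End Renewal.

Local Close Scope R_scope.

Lemma bxorK n (a w : bs n) : bxor (bxor a w) w = a.
Proof. by apply/ffunP=> i; rewrite !ffunE; case: (a i); case: (w i). Qed.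

Lemma bxor_inj n (w : bs n) : injective (fun a : bs n => bxor a w).
Proof. by move=> a b ab; rewrite -(bxorK a w) ab bxorK. Qed.

Lemma agree_bxor n (a b w : bs n) : agree (bxor a w) (bxor b w) = agree a b.
Proof. by apply/setP=> i; rewrite !inE !ffunE; case: (a i); case: (b i); case: (w i). Qed.

Lemma differ_bxor n (a b w : bs n) : differ (bxor a w) (bxor b w) = differ a b.
Proof. by apply/setP=> i; rewrite !inE !ffunE; case: (a i); case: (b i); case: (w i). Qed.

Lemma flip_bxor n (a w : bs n) i : flip (bxor a w) i = bxor (flip a i) w.
Proof. by apply/ffunP=> j; rewrite !ffunE; case: (j == i); case: (a j); case: (w j). Qed.

Lemma flipset_bxor n (a w : bs n) S : flipset (bxor a w) S = bxor (flipset a S) w.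
Proof. by apply/ffunP=> j; rewrite !ffunE; case: (j \in S); case: (a j); case: (w j). Qed.

Lemma K1_bxor n (w a b z : bs n) : K1 (bxor a w) (bxor b w) (bxor z w) = K1 a b z.
Proof.
rewrite /K1 agree_bxor; apply: eq_bigr => i _.
by rewrite flip_bxor (inj_eq (@bxor_inj n w)).
Qed.

Lemma K2_bxor n k (w a b z : bs n) : K2 k (bxor a w) (bxor b w) (bxor z w) = K2 k a b z.
Proof.
have ksets_bxor : ksets k (bxor a w) (bxor b w) = ksets k a b.
  by apply/setP=> S; rewrite !inE differ_bxor.
rewrite /K2 ksets_bxor; apply: eq_bigr => S _.
by rewrite flipset_bxor (inj_eq (@bxor_inj n w)).
Qed.

Section Permutation.
Variables (n : nat) (s : 'I_n -> 'I_n).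
Hypothesis s_bij : bijective s.
Let s_inj : injective s := bij_inj s_bij.

Lemma bperm_inj : injective (@bperm n s).
Proof.
case: s_bij => g sg gs a b ab; apply/ffunP=> i.
by have := congr1 (fun f : bs n => f (g i)) ab; rewrite !ffunE gs.
Qed.

Lemma agree_bperm (a b : bs n) : agree (bperm s a) (bperm s b) = s @^-1: agree a b.
Proof. by apply/setP=> i; rewrite !inE !ffunE. Qed.

Lemma differ_bperm (a b : bs n) : differ (bperm s a) (bperm s b) = s @^-1: differ a b.
Proof. by apply/setP=> i; rewrite !inE !ffunE. Qed.

Lemma flip_bperm (a : bs n) i : flip (bperm s a) i = bperm s (flip a (s i)).
Proof. by apply/ffunP=> j; rewrite !ffunE (inj_eq s_inj). Qed.

Lemma flipset_bperm (a : bs n) S :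
  flipset (bperm s a) S = bperm s (flipset a (s @: S)).
Proof. by apply/ffunP=> j; rewrite !ffunE (mem_imset _ _ s_inj). Qed.

Lemma K1_bperm (a b z : bs n) : K1 (bperm s a) (bperm s b) (bperm s z) = K1 a b z.
Proof.
rewrite /K1 agree_bperm card_preimset // [in RHS](reindex_inj s_inj) /=.
apply: eq_big => [i|i _]; first by rewrite !inE.
by rewrite flip_bperm (inj_eq bperm_inj).
Qed.

Lemma imset_set_inj : injective (fun S : {set 'I_n} => s @: S).
Proof. by move=> S1 S2; apply: imset_inj. Qed.

Lemma ksets_bperm k (a b : bs n) :
  ksets k (bperm s a) (bperm s b) =
  (fun S : {set 'I_n} => s @: S) @^-1: ksets k a b.
Proof.
apply/setP=> S; rewrite !inE differ_bperm (card_imset _ s_inj); congr (_ && _).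
apply/subsetP/subsetP => [sub _ /imsetP [i iS ->]|sub i iS].
  by have := sub i iS; rewrite inE.
by rewrite inE; apply/sub/imset_f.
Qed.

Lemma K2_bperm k (a b z : bs n) : K2 k (bperm s a) (bperm s b) (bperm s z) = K2 k a b z.
Proof.
rewrite /K2 ksets_bperm card_preimset; last exact: imset_set_inj.
rewrite [in RHS](reindex_inj imset_set_inj) /=.
apply: eq_big => [S|S _]; first by rewrite !inE.
by rewrite flipset_bperm (inj_eq bperm_inj).
Qed.

End Permutation.

Lemma binary_unbiased_K1 n : binary_unbiased (@K1 n).
Proof. by split=> [w a b z|s s_bij a b z]; [exact: K1_bxor | exact: K1_bperm]. Qed.

Lemma binary_unbiased_K2 n k : binary_unbiased (@K2 n k).
Proof. by split=> [w a b z|s s_bij a b z]; [exact: K2_bxor | exact: K2_bperm]. Qed.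

Lemma half_add_half n : ~~ odd n -> n = n./2 + n./2.
Proof. by move=> n_even; rewrite -{1}(odd_double_half n) (negbTE n_even) addnn. Qed.

Section Bits.
Variable n : nat.
Implicit Types (x y : bs n) (S : {set 'I_n}).

Lemma ones_flipset_bounds x S :
  ones x <= ones (flipset x S) + #|S| /\ ones (flipset x S) <= ones x + #|S|.
Proof.
have cardU_le (A B : {set 'I_n}) : #|A :|: B| <= #|A| + #|B|.
  by rewrite cardsU leq_subr.
split; [apply: (leq_trans _ (cardU_le [set i | flipset x S i] S))
       |apply: (leq_trans _ (cardU_le [set i | x i] S))];
  apply/subset_leq_card/subsetP=> j; rewrite !inE ffunE;
  by case: (j \in S); rewrite ?orbT ?orbF.
Qed.

Lemma ones_flipset_true x S : (forall j, j \in S -> x j) ->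
  ones x = ones (flipset x S) + #|S|.
Proof.
move=> Sx; have S_sub : S \subset [set i | x i].
  by apply/subsetP=> j /Sx; rewrite inE.
rewrite /ones (_ : [set i | flipset x S i] = [set i | x i] :\: S).
  by rewrite cardsDS // subnK // subset_leq_card.
by apply/setP=> j; rewrite !inE ffunE; case: ifP => [/Sx ->|].
Qed.

Lemma ones_flipset_false x S : (forall j, j \in S -> ~~ x j) ->
  ones (flipset x S) = ones x + #|S|.
Proof.
move=> Sx; rewrite /ones (_ : [set i | flipset x S i] = [set i | x i] :|: S).
  rewrite cardsU (_ : _ :&: S = set0) ?cards0 ?subn0 //.
  apply/setP=> j; rewrite !inE.
  by case: (boolP (j \in S)) => [/Sx/negbTE ->|]; rewrite ?andbF.
by apply/setP=> j; rewrite !inE ffunE; case: ifP => [/Sx/negbTE ->|]; rewrite ?orbF.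
Qed.

Lemma flip_flipset x i : flip x i = flipset x [set i].
Proof. by apply/ffunP=> j; rewrite !ffunE inE. Qed.

Lemma ones_flip_true x i : x i -> ones x = (ones (flip x i)).+1.
Proof.
move=> xi; rewrite flip_flipset (@ones_flipset_true x [set i]) ?cards1 ?addn1 //.
by move=> j; rewrite inE => /eqP ->.
Qed.

Lemma ones_flip_false x i : ~~ x i -> ones (flip x i) = (ones x).+1.
Proof.
move=> xi; rewrite flip_flipset (@ones_flipset_false x [set i]) ?cards1 ?addn1 //.
by move=> j; rewrite inE => /eqP ->.
Qed.

Lemma ham_flip x i : ham x (flip x i) = 1.
Proof.
rewrite /ham (_ : [set j | x j != flip x i j] = [set i]) ?cards1 //.
by apply/setP=> j; rewrite !inE ffunE; case: (j == i); case: (x j).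
Qed.

Lemma differ_flip x y i : x i = y i -> differ (flip x i) y = i |: differ x y.
Proof.
move=> xy; apply/setP=> j; rewrite !inE ffunE.
by case: (eqVneq j i) => [->|] //=; rewrite xy; case: (y i).
Qed.

Lemma ham_flip_agree x y i : x i = y i -> ham (flip x i) y = (ham x y).+1.
Proof.
move=> xy; rewrite /ham -/(differ (flip x i) y) -/(differ x y) differ_flip //.
by rewrite cardsU1 inE xy eqxx.
Qed.

Lemma agreeE x y : agree x y = ~: differ x y.
Proof. by apply/setP=> j; rewrite !inE negbK. Qed.

Lemma card_agree x y : #|agree x y| + ham x y = n.
Proof. by rewrite agreeE /ham -/(differ x y) addnC cardsC card_ord. Qed.

Lemma ones_split x y :
  ones x = #|[set i | x i] :&: differ x y| + #|[set i | x i] :&: agree x y| /\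
  ones y = ham x y - #|[set i | x i] :&: differ x y| + #|[set i | x i] :&: agree x y|.
Proof.
split; first by rewrite /ones agreeE -(cardsID (differ x y)) setDE.
have yD : [set i | y i] :&: differ x y = differ x y :\: [set i | x i].
  by apply/setP=> j; rewrite !inE; case: (x j); case: (y j).
have yA : [set i | y i] :&: agree x y = [set i | x i] :&: agree x y.
  by apply/setP=> j; rewrite !inE; case: (x j); case: (y j).
rewrite /ones -(cardsID (differ x y) [set i | y i]) yD (setDE [set i | y i]) -agreeE yA.
have := cardsID [set i | x i] (differ x y).
by rewrite setIC /ham -/(differ x y) => <-; rewrite addKn.
Qed.

End Bits.

Lemma sgn_mul_opp (u v : Z) : (Z.sgn u * Z.sgn v = -1)%Z ->
  ((0 < u)%Z /\ (v < 0)%Z) \/ ((u < 0)%Z /\ (0 < v)%Z).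
Proof.
case: (Z.sgn_spec u) => [[? ->]|[[? ->]|[? ->]]];
case: (Z.sgn_spec v) => [[? ->]|[[? ->]|[? ->]]]; lia.
Qed.

(* [b0] tells on which side of the middle level [x] lies. *)
Lemma opposing_pair_structure n k (x y : bs n) :
  ~~ odd n -> opposing_pair k x y -> exists b0 : bool,
  [/\ forall j, j \in differ x y -> x j = b0,
      ones x = (if b0 then n./2 + k else n./2 - k),
      #|[set i in agree x y | x i != b0]| = n./2 - k &
      ham x y = 2 * k].
Proof.
move=> n_even [sgn_xy [dx [dy hxy]]].
have [ox oy] := ones_split x y.
have D_le : #|[set i | x i] :&: differ x y| <= ham x y.
  by rewrite subset_leq_card ?subsetIr.
have nA := card_agree x y; have nh := half_add_half n_even.
have xA : #|[set i | x i] :&: agree x y| + #|agree x y :\: [set i | x i]| = #|agree x y|.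
  by rewrite setIC cardsID.
move: sgn_xy dx dy; rewrite /sgnhalf /dhalf => /sgn_mul_opp sgn_xy dx dy.
set a := #|[set i | x i] :&: differ x y| in ox oy D_le.
have [x_up|x_down] : a = ham x y \/ a = 0 by lia.
- exists true; split=> //.
  + move=> j jD; have : [set i | x i] :&: differ x y = differ x y.
      by apply/eqP; rewrite eqEcard subsetIr -/a x_up leqnn.
    by move/setP/(_ j); rewrite jD !inE => /andP [].
  + lia.
  + rewrite (_ : [set i in agree x y | x i != true] = agree x y :\: [set i | x i]).
      by lia.
    by apply/setP=> j; rewrite !inE; case: (x j); rewrite ?andbF ?andbT.
- exists false; split=> //.
  + move=> j jD; apply/negbTE/negP => xj.
    have /setP/(_ j) := cards0_eq x_down.
    by rewrite in_setI jD inE xj in_set0.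
  + lia.
  + rewrite (_ : [set i in agree x y | x i != false] = [set i | x i] :&: agree x y).
      have ox' : ones x = n./2 - k by lia.
      by rewrite -ox' ox x_down.
    by apply/setP=> j; rewrite !inE; case: (x j); rewrite ?andbF ?andbT.
Qed.

Lemma bin_succ_le_double m j : j.*2 <= m.+1 -> 'C(m.+1, j) <= 2 * 'C(m, j).
Proof. by move=> jm; have := mul_bin_down m.+1 j; rewrite /=; nia. Qed.

Lemma jump_eq_half n (u : bs n) : (jump u == n./2) = (ones u == n./2).
Proof.
have ones_le : ones u <= n by rewrite /ones -[n in _ <= n]card_ord max_card.
rewrite /jump; case: (eqVneq (ones u) n) => [->|u_n]; first by [].
case: (eqVneq (ones u) n./2) => [u_half|u_half]; first by rewrite eqxx.
by apply/negbTE/eqP; lia.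
Qed.

Local Open Scope R_scope.

Lemma sum_K1 n (x y : bs n) (F : bs n -> R) :
  \big[Rplus/0]_(z : bs n) (K1 x y z * F z) =
  \big[Rplus/0]_(i in agree x y) (/ INR #|agree x y| * F (flip x i)).
Proof.
rewrite /K1 (eq_bigr (fun z => \big[Rplus/0]_(i in agree x y)
    (/ INR #|agree x y| * indR (z == flip x i) * F z)));
  last by move=> z _; rewrite big_distrl.
rewrite exchange_big /=; apply: eq_bigr => i _.
rewrite -(sumR_indR_eq (flip x i) (fun z => / INR #|agree x y| * F z)).
by apply: eq_bigr => z _; case: (z == flip x i) => /=; ring.
Qed.

Lemma psuccE n k (z y : bs n) :
  psucc k z y = \big[Rplus/0]_(S in ksets k z y)
     (/ INR #|ksets k z y| * indR (jump (flipset z S) == n./2)).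
Proof.
rewrite /psucc /K2 (eq_bigr (fun u => \big[Rplus/0]_(S in ksets k z y)
    (/ INR #|ksets k z y| * indR (u == flipset z S) * indR (jump u == n./2))));
  last by move=> u _; rewrite big_distrl.
rewrite exchange_big /=; apply: eq_bigr => S _.
rewrite -(sumR_indR_eq (flipset z S)
  (fun u => / INR #|ksets k z y| * indR (jump u == n./2))).
by apply: eq_bigr => u _; case: (u == flipset z S) => /=; ring.
Qed.

Lemma K1_ge0 n (x y z : bs n) : 0 <= K1 x y z.
Proof.
apply: sumR_ge0 => i _; have := invR_nat_ge0 #|agree x y|.
by have := indR_bounds (z == flip x i); nra.
Qed.

Lemma psucc_bounds n k (z y : bs n) : 0 <= psucc k z y <= 1.
Proof.
have w_ge0 := invR_nat_ge0 #|ksets k z y|.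
rewrite psuccE; split.
  by apply: sumR_ge0 => S _; have := indR_bounds (jump (flipset z S) == n./2); nra.
apply: (Rle_trans _ (\big[Rplus/0]_(S in ksets k z y) / INR #|ksets k z y|)).
  by apply: ler_sumR => S _; have := indR_bounds (jump (flipset z S) == n./2); nra.
rewrite sumR_const; have [->|ks_gt0] := posnP #|ksets k z y|.
  by rewrite Rmult_0_l; lra.
by rewrite Rinv_r; [lra | apply: not_0_INR; lia].
Qed.

(* An agreement position [i] is outward when [x i != b0], i.e. flipping it moves
   [x] one step further from the middle level. *)
Section FlipFromOpposing.
Variables (n k : nat) (x y : bs n) (b0 : bool).
Hypotheses (n_even : ~~ odd n) (k_ge1 : (1 <= k)%N) (k_le : (k <= n./2 - 1)%N)
  (differ_b0 : forall j, j \in differ x y -> x j = b0)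
  (ones_x : ones x = (if b0 then n./2 + k else n./2 - k)%N)
  (ham_xy : ham x y = (2 * k)%N).

Lemma outward_flip i : i \in agree x y -> x i != b0 ->
  [/\ dhalf (flip x i) = k.+1, ham x (flip x i) = 1%N,
      ham (flip x i) y = (2 * k).+1 & psucc k (flip x i) y = 0].
Proof.
rewrite inE => /eqP xy_i xi_b0; have nh := half_add_half n_even.
have ones_z : ones (flip x i) = (if b0 then n./2 + k.+1 else n./2 - k.+1)%N.
  move: xi_b0 ones_x; case: b0; case xi: (x i) => //= _ ox.
    by rewrite ones_flip_false ?xi // ox addnS.
  by have := ones_flip_true xi; rewrite ox; lia.
split; first by rewrite /dhalf ones_z; case: (b0); lia.
- exact: ham_flip.
- by rewrite ham_flip_agree // ham_xy.
rewrite psuccE big1 // => S; rewrite inE => /andP [_ /eqP card_S].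
have [lb ub] := ones_flipset_bounds (flip x i) S.
rewrite jump_eq_half (_ : (ones _ == n./2) = false) ?Rmult_0_r //.
by apply/negbTE; move: lb ub; rewrite ones_z card_S; case: (b0); lia.
Qed.

(* After an inward flip, flipping any [k-1] of the [2k] original differing
   positions lands on level [n/2]; these are at least half of all choices. *)
Lemma inward_flip i : i \in agree x y -> x i = b0 ->
  dhalf (flip x i) != k.+1 /\ / 2 <= psucc k (flip x i) y.
Proof.
rewrite inE => /eqP xy_i xi_b0; have nh := half_add_half n_even.
set z := flip x i.
have ones_z : ones z = (if b0 then n./2 + k.-1 else n./2 - k.-1)%N.
  move: xi_b0 ones_x; rewrite /z; case: b0 => xi ox.
    by have := ones_flip_true xi; rewrite ox; lia.
  by rewrite ones_flip_false ?xi // ox; lia.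
split; first by rewrite /dhalf ones_z; apply/eqP; case: (b0); lia.
set D := differ x y.
have i_D : i \notin D by rewrite inE xy_i eqxx.
have D_sub : D \subset differ z y by rewrite /z differ_flip // subsetUr.
have z_D j : j \in D -> z j = b0.
  move=> jD; rewrite /z ffunE; case: eqP => [ji|_]; last exact: differ_b0.
  by move: i_D; rewrite -ji jD.
pose good := [set S : {set 'I_n} | S \subset D & #|S| == k.-1].
have good_half S : S \in good -> ones (flipset z S) = n./2.
  rewrite inE => /andP [SD /eqP card_S].
  have z_S j : j \in S -> z j = b0 by move=> jS; apply/z_D/(subsetP SD).
  move: z_S ones_z; case: (b0) => z_S oz.
    by have := ones_flipset_true z_S; rewrite oz card_S; lia.
  by rewrite ones_flipset_false ?oz ?card_S; [lia | move=> j /z_S ->].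
have card_ks : #|ksets k z y| = 'C((2 * k).+1, k.-1).
  by rewrite /ksets cards_draws -/(ham z y) ham_flip_agree // ham_xy.
have card_good : #|good| = 'C(2 * k, k.-1).
  by rewrite /good cards_draws -/(ham x y) ham_xy.
have ks_pos : 0 < INR #|ksets k z y|.
  by rewrite card_ks; apply/lt_0_INR/ltP; rewrite bin_gt0; lia.
rewrite psuccE.
apply: (Rle_trans _ (\big[Rplus/0]_(S in good) / INR #|ksets k z y|)); last first.
  rewrite big_mkcond [X in _ <= X]big_mkcond /=; apply: ler_sumR => S _.
  have w_ge0 : 0 <= / INR #|ksets k z y| by left; apply: Rinv_0_lt_compat.
  case: ifP => S_good.
    have -> : S \in ksets k z y.
      by move: S_good; rewrite !inE => /andP [SD ->]; rewrite (subset_trans SD D_sub).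
    by rewrite jump_eq_half good_half // eqxx /=; lra.
  case: ifP => _; last lra.
  by apply: Rmult_le_pos => //; case: (indR_bounds (jump (flipset z S) == n./2)).
rewrite sumR_const card_good.
have /leP/le_INR : ('C((2 * k).+1, k.-1) <= 2 * 'C(2 * k, k.-1))%N.
  by apply: bin_succ_le_double; lia.
rewrite mult_INR -card_ks [INR 2]/= => bin_le.
apply: (Rmult_le_reg_r (INR #|ksets k z y|)) => //.
by rewrite Rmult_assoc Rinv_l; lra.
Qed.

End FlipFromOpposing.

Lemma log2_ge_2 n : (4 <= n)%N -> 2 <= log2 (INR n).
Proof.
move=> n_ge4; have n_ge4R : 4 <= INR n by have := le_INR 4 n (leP n_ge4); rewrite /=; lra.
have ln2 : 0 < ln 2 by have := ln_lt_2; lra.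
have ln4 : ln 4 = 2 * ln 2 by rewrite (_ : 4 = 2 * 2) ?ln_mult; lra.
have ln_n : ln 4 <= ln (INR n).
  by case: (Req_dec (INR n) 4) => [->|n4]; [lra | left; apply: ln_increasing; lra].
rewrite /log2; apply: (Rmult_le_reg_r (ln 2)) => //.
by rewrite /Rdiv Rmult_assoc Rinv_l; lra.
Qed.

Lemma INR_ntests n : (4 <= n)%N ->
  INR (ntests n) = IZR (Int_part (2 * log2 (INR n))) + 1.
Proof.
move=> n_ge4; have log_n := log2_ge_2 n_ge4.
have [_ floor_gt] := base_Int_part (2 * log2 (INR n)).
have /le_IZR floor_ge0 : IZR 0 <= IZR (Int_part (2 * log2 (INR n))) by lra.
by rewrite /ntests S_INR INR_IZR_INZ Z2Nat.id.
Qed.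

Lemma ntests_le n : (4 <= n)%N -> INR (ntests n) <= 1 + 2 * log2 (INR n).
Proof.
move=> n_ge4; have [floor_le _] := base_Int_part (2 * log2 (INR n)).
by rewrite INR_ntests //; lra.
Qed.

(* [2 ^ ntests n > 2 ^ (2 log2 n) = n ^ 2]. *)
Lemma half_pow_ntests_le n : (4 <= n)%N ->
  (/ 2) ^ ntests n <= 2 * log2 (INR n) / INR n ^ 2.
Proof.
move=> n_ge4; have log_n := log2_ge_2 n_ge4.
have n_gt0 : 0 < INR n by apply/lt_0_INR/ltP; lia.
have ln2 : 0 < ln 2 by have := ln_lt_2; lra.
have [_ floor_gt] := base_Int_part (2 * log2 (INR n)).
have n2_lt : INR n ^ 2 < 2 ^ ntests n.
  rewrite -(@Rpower_pow (ntests n) 2); last lra.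
  rewrite /Rpower -[INR n ^ 2]exp_ln; last exact: pow_lt.
  apply: exp_increasing; rewrite INR_ntests // ln_pow //.
  have -> : INR 2 * ln (INR n) = 2 * log2 (INR n) * ln 2 by rewrite /log2 /=; field; lra.
  by nra.
rewrite pow_inv; apply: (Rle_trans _ (/ INR n ^ 2)).
  by left; apply: Rinv_lt_contravar n2_lt; apply: Rmult_lt_0_compat; apply: pow_lt; lra.
rewrite /Rdiv -{1}(Rmult_1_l (/ INR n ^ 2)); apply: Rmult_le_compat_r; last lra.
by left; apply/Rinv_0_lt_compat/pow_lt.
Qed.

Lemma sumR_first_success (a : R) m T : (T <= m)%N ->
  \big[Rplus/0]_(0 <= j < T.+1) (if (1 <= j <= m)%N then a ^ (j - 1) * (1 - a) else 0)
  = 1 - a ^ T.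
Proof.
elim: T => [|T IH] T_le; first by rewrite sumR_nat1 /=; lra.
rewrite big_nat_recr //= IH; last lia.
by rewrite (_ : (T < m)%N) // subSS subn0; ring.
Qed.

Section MoveFirst.
Variables (n k : nat) (x y : bs n) (b0 : bool).
Hypotheses (n_ge4 : (4 <= n)%N) (n_even : ~~ odd n)
  (k_ge1 : (1 <= k)%N) (k_le : (k <= n./2 - 1)%N)
  (differ_b0 : forall j, j \in differ x y -> x j = b0)
  (ones_x : ones x = (if b0 then n./2 + k else n./2 - k)%N)
  (card_outward : #|[set i in agree x y | x i != b0]| = (n./2 - k)%N)
  (ham_xy : ham x y = (2 * k)%N).

Let m := ntests n.
Let rho j := iter_restart k x y j.
Let beta z := K1 x y z * (1 - psucc k z y) ^ m.
Let c := / INR #|agree x y|.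
Let q := (/ 2) ^ m.

Let outward := outward_flip n_even k_ge1 k_le differ_b0 ones_x ham_xy.
Let inward := inward_flip n_even k_ge1 k_le differ_b0 ones_x ham_xy.

Lemma rho_ge0 j : 0 <= rho j.
Proof.
rewrite /rho /iter_restart; case: ifP => _; last lra.
apply: sumR_ge0 => z _; have [p0 p1] := psucc_bounds k z y.
apply: Rmult_le_pos; last lra.
by apply: Rmult_le_pos; [exact: K1_ge0 | apply: pow_le; lra].
Qed.

Lemma rho_gt j : (m < j)%N -> rho j = 0.
Proof.
by move=> m_lt; rewrite /rho /iter_restart (_ : (1 <= j <= ntests n)%N = false) //; lia.
Qed.

Lemma beta_ge0 z : 0 <= beta z.
Proof.
have [p0 p1] := psucc_bounds k z y.
by apply: Rmult_le_pos; [exact: K1_ge0 | apply: pow_le; lra].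
Qed.

Lemma law_renewal z t : law k x y z t = renewal_law rho beta m z t.
Proof.
have iterE r t' : law_iter k x y r z t' = renewal rho beta m r z t'.
  by elim: r t' => [|r IH] t' //=; apply: eq_bigr => j _; rewrite IH.
by apply: eq_bigr => r _; rewrite iterE.
Qed.

Lemma sum_agree_c : \big[Rplus/0]_(i in agree x y) c = 1.
Proof.
have := card_agree x y; rewrite ham_xy => nA.
rewrite sumR_const /c Rinv_r //; apply: not_0_INR; have := half_add_half n_even; lia.
Qed.

Lemma sum_outward_c :
  \big[Rplus/0]_(i in agree x y) (if x i != b0 then c else 0) = / 2.
Proof.
rewrite -big_mkcondr /= (eq_bigl (mem [set i in agree x y | x i != b0])).
  2: by move=> i; rewrite !inE.
have := card_agree x y; rewrite ham_xy => nA.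
have nh := half_add_half n_even.
rewrite sumR_const card_outward /c (_ : #|agree x y| = 2 * (n./2 - k))%N; last lia.
have : 0 < INR (n./2 - k) by apply/lt_0_INR/ltP; lia.
by rewrite mult_INR /=; move=> ?; field; lra.
Qed.

Lemma restart_massE : restart_mass rho m =
  \big[Rplus/0]_(z : bs n) (K1 x y z * (1 - (1 - psucc k z y) ^ m)).
Proof.
rewrite /restart_mass (eq_big_nat _ _ (F2 := fun j => \big[Rplus/0]_(z : bs n)
   (if (1 <= j <= m)%N then K1 x y z * (1 - psucc k z y) ^ (j - 1) * psucc k z y
    else 0))); last first.
  by move=> j _; rewrite /rho /iter_restart; case: ifP => // _; rewrite big1.
rewrite exchange_big /=; apply: eq_bigr => z _.
rewrite -(sumR_first_success (1 - psucc k z y) (leqnn m)) big_distrr /=.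
by apply: eq_big_nat => j _; case: ifP => _; ring.
Qed.

Lemma restart_mass_add_output : restart_mass rho m + output_mass beta predT = 1.
Proof.
have K1_total : \big[Rplus/0]_(z : bs n) (K1 x y z * 1) = 1.
  by rewrite sum_K1 -[RHS]sum_agree_c; apply: eq_bigr => i _; rewrite Rmult_1_r.
have split_one a b : a * (1 - b) + a * b = a * 1 by ring.
rewrite restart_massE /output_mass (eq_bigl xpredT) // -big_split -[RHS]K1_total.
by apply: eq_bigr => z _; exact: split_one.
Qed.

Lemma output_massE (E : pred (bs n)) : output_mass beta E =
  \big[Rplus/0]_(i in agree x y)
    (c * ((1 - psucc k (flip x i) y) ^ m * indR (E (flip x i)))).
Proof.
rewrite /output_mass big_mkcond /c.
rewrite -(sum_K1 x y (fun z => (1 - psucc k z y) ^ m * indR (E z))).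
apply: eq_bigr => z _.
by rewrite /beta; case: (E z) => /=; ring.
Qed.

Lemma output_mass_outward (E : pred (bs n)) :
  (forall i, i \in agree x y -> x i != b0 -> E (flip x i)) ->
  (forall i, i \in agree x y -> x i = b0 -> ~~ E (flip x i)) ->
  output_mass beta E = / 2.
Proof.
move=> E_out E_in; rewrite output_massE -sum_outward_c; apply: eq_bigr => i iA.
case: ifP => [i_out|/negbFE/eqP i_in].
  by have [_ _ _ ->] := outward iA i_out; rewrite E_out //= Rminus_0_r pow1; ring.
by rewrite (negbTE (E_in i iA i_in)) /=; ring.
Qed.

Lemma output_mass_bounds : / 2 <= output_mass beta predT <= (1 + q) / 2.
Proof.
have c_ge0 : 0 <= c := invR_nat_ge0 _.
have q_ge0 : 0 <= q by apply: pow_le; lra.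
rewrite output_massE; under eq_bigr do rewrite [indR _]/= Rmult_1_r.
split.
  rewrite -sum_outward_c; apply: ler_sumR => i iA.
  case: ifP => [i_out|_].
    by have [_ _ _ ->] := outward iA i_out; rewrite Rminus_0_r pow1; lra.
  have [p0 p1] := psucc_bounds k (flip x i) y.
  have : 0 <= (1 - psucc k (flip x i) y) ^ m by apply: pow_le; lra.
  by nra.
apply: (Rle_trans _ (\big[Rplus/0]_(i in agree x y)
         (q * c + (1 - q) * (if x i != b0 then c else 0)))).
  apply: ler_sumR => i iA; case: ifP => [i_out|/negbFE/eqP i_in].
    by have [_ _ _ ->] := outward iA i_out; rewrite Rminus_0_r pow1; lra.
  have [_ p_half] := inward iA i_in.
  have [p0 p1] := psucc_bounds k (flip x i) y.
  have : (1 - psucc k (flip x i) y) ^ m <= q by apply: pow_incr; lra.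
  by nra.
by rewrite big_split /= -!big_distrr /= sum_agree_c sum_outward_c; lra.
Qed.

Lemma restart_mass_bounds : 0 <= restart_mass rho m <= / 2.
Proof.
have := restart_mass_add_output; have := output_mass_bounds.
have : q <= 1 by rewrite /q -(pow1 m); apply: pow_incr; lra.
by lra.
Qed.

Lemma probE_partial_cvg (E : pred (bs n)) :
  Un_cv (probE_partial k x y E) (output_mass beta E / (1 - restart_mass rho m)).
Proof.
have Rt_bd : 0 <= restart_mass rho m < 1 by have := restart_mass_bounds; lra.
move=> eps eps_gt0; have [N0 N0_close] :=
  renewal_output_cvg (ltn0Sn _) rho_ge0 (erefl _) rho_gt beta_ge0 E Rt_bd eps_gt0.
exists N0 => N N_ge; rewrite /probE_partial.
by under eq_bigr do under eq_bigr do rewrite law_renewal; exact: N0_close.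
Qed.

Lemma probT_le_geometric (E : pred (bs n)) s :
  geom_le (1 + 2 * log2 (INR n)) s *
    (output_mass beta E / (1 - restart_mass rho m)) <= probT_le k x y E s.
Proof.
rewrite /probT_le; under eq_bigr do under eq_bigr do rewrite law_renewal.
exact: (renewal_time_geometric_lb (ltn0Sn _) rho_ge0 (erefl _) rho_gt beta_ge0 _ _
          (ntests_le n_ge4) restart_mass_bounds).
Qed.

Lemma output_mass_ratio_all : output_mass beta predT / (1 - restart_mass rho m) = 1.
Proof.
have := restart_mass_add_output; have [half_le _] := output_mass_bounds.
by move=> sum1; rewrite (_ : 1 - _ = output_mass beta predT); [field | ]; lra.
Qed.

Lemma output_mass_ratio_ge (E : pred (bs n)) : output_mass beta E = / 2 ->
  1 - 2 * log2 (INR n) / INR n ^ 2 <= output_mass beta E / (1 - restart_mass rho m).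
Proof.
move=> ->; have := restart_mass_add_output; have := output_mass_bounds.
have := half_pow_ntests_le n_ge4; rewrite -/m -/q.
have q_ge0 : 0 <= q by apply: pow_le; lra.
set B := output_mass beta predT => q_le [B_ge B_le] sum1.
rewrite (_ : 1 - restart_mass rho m = B); last lra.
apply: (Rle_trans _ (1 - q)); first lra.
apply: (Rmult_le_reg_r B); first lra.
by rewrite /Rdiv Rmult_assoc Rinv_l; [nra | lra].
Qed.

Lemma moveFirst_bounds :
  (forall s, geom_le (1 + 2 * log2 (INR n)) s <= probT_le k x y predT s) /\
  (exists pE,
     Un_cv (probE_partial k x y (fun z => dhalf z == k.+1)) pE /\
     forall s, geom_le (1 + 2 * log2 (INR n)) s * pE
                 <= probT_le k x y (fun z => dhalf z == k.+1) s) /\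
  (exists p,
     Un_cv (probE_partial k x y (fun z =>
              [&& dhalf z == k.+1, ham x z == 1%N & ham z y == (2 * k).+1])) p /\
     1 - 2 * log2 (INR n) / INR n ^ 2 <= p).
Proof.
split.
  move=> s; have := probT_le_geometric predT s.
  by rewrite output_mass_ratio_all Rmult_1_r.
split; first by eexists; split; [exact: probE_partial_cvg | exact: probT_le_geometric].
eexists; split; first exact: probE_partial_cvg.
apply/output_mass_ratio_ge/output_mass_outward => i iA i_side.
  by have [-> -> -> _] := outward iA i_side; rewrite !eqxx.
by have [/negbTE -> _] := inward iA i_side.
Qed.

End MoveFirst.

Local Close Scope R_scope.

Theorem lemma13 (n k : nat) (x y : bs n) :
  (4 <= n)%N -> ~~ odd n -> (1 <= k <= n./2 - 1)%N ->
  (binary_unbiased (@K1 n) /\ binary_unbiased (@K2 n k)) /\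
  (opposing_pair k x y ->
     (forall s : R,
        (geom_le (1 + 2 * log2 (INR n)) s <= probT_le k x y predT s)%Re) /\
     (exists pE : R,
        Un_cv (probE_partial k x y (fun z => dhalf z == k.+1)) pE /\
        forall s : R,
          (geom_le (1 + 2 * log2 (INR n)) s * pE
             <= probT_le k x y (fun z => dhalf z == k.+1) s)%Re) /\
     (exists p : R,
        Un_cv (probE_partial k x y
                 (fun z => [&& dhalf z == k.+1, ham x z == 1 & ham z y == (2 * k).+1])) p /\
        (1 - 2 * log2 (INR n) / (INR n) ^ 2 <= p)%Re)).
Proof.
move=> n_ge4 n_even /andP [k_ge1 k_le].
split; first by split; [exact: binary_unbiased_K1 | exact: binary_unbiased_K2].
move=> /(opposing_pair_structure n_even) [b0 [differ_b0 ones_x card_out ham_xy]].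
exact: (moveFirst_bounds n_ge4 n_even k_ge1 k_le differ_b0 ones_x card_out ham_xy).
Qed.
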